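(* Let $G,H$ be groups, $K\le H$, $\phi\in\mathrm{Hom}(H,G)$, and let $\mathcal{T}:A^G\to A^H$ be a $\phi$-cellular automaton with memory set contained in $\phi(K)$. Then: (1) $\mathcal{T}$ is injective if and only if $\mathcal{T}_K$ is injective and $\phi$ is surjective; (2) $\mathcal{T}$ is bijective if and only if $\mathcal{T}_K$ is bijective and $\phi$ is bijective.
   Context: $A$ is a finite set with $|A|\ge 2$. For a group $G$, $A^G$ is the set of functions $G\to A$ with shift action $(g\cdot x)(k):=x(g^{-1}k)$. For $\phi\in\mathrm{Hom}(H,G)$, a $\phi$-cellular automaton is a map $\mathcal{T}:A^G\to A^H$ for which there exist finite $T\subseteq G$ (memory set) and $\mu:A^T\to A$ (local function) with $\mathcal{T}(x)(h)=\mu((\phi(h^{-1})\cdot x)|_T)$ for all $x,h$. If the memory set $T$ is contained in $\phi(K)$, the restriction $\mathcal{T}_K:A^{\phi(K)}\to A^K$ is defined by $\mathcal{T}_K(x)(k):=\mu((\phi(k^{-1})\cdot x)|_T)$ for $x\in A^{\phi(K)}$, $k\in K$; equivalently it is the unique $\phi|_K^{\phi(K)}$-cellular automaton with $\mathcal{T}(x)|_K=\mathcal{T}_K(x|_{\phi(K)})$ for all $x\in A^G$. *)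

From mathcomp Require Import all_boot.
From Stdlib Require Import List.
Set Implicit Arguments. Unset Strict Implicit. Unset Printing Implicit Defensive.

Record group := Group {
  gcar :> Type;
  gmul : gcar -> gcar -> gcar;
  gone : gcar;
  ginv : gcar -> gcar;
  gmulA : forall x y z, gmul x (gmul y z) = gmul (gmul x y) z;
  gmul1l : forall x, gmul gone x = x;
  gmulVl : forall x, gmul (ginv x) x = gone
}.
Arguments gmul {g}. Arguments gone {g}. Arguments ginv {g}.

Record hom (H G : group) := Hom {
  hfun :> H -> G;
  hfunM : forall x y, hfun (gmul x y) = gmul (hfun x) (hfun y)
}.

Record subgroup (H : group) := Subgroup {
  smem :> H -> Prop;
  smem1 : smem gone;
  smemM : forall x y, smem x -> smem y -> smem (gmul x y);
  smemV : forall x, smem x -> smem (ginv x)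
}.

Definition shift (G : group) (A : Type) (g : G) (x : G -> A) : G -> A :=
  fun k => x (gmul (ginv g) k).

(* Memory sets are finite subsets T of G, given by a list; A^T is the type of
   functions on the elements of T. *)
Definition memT (G : group) (T : list G) := {t : G | In t T}.

Definition ca (H G : group) (A : Type) (phi : hom H G) (T : list G)
  (mu : (memT T -> A) -> A) : (G -> A) -> (H -> A) :=
  fun x h => mu (fun t => shift (phi (ginv h)) x (proj1_sig t)).

Definition img (H G : group) (phi : hom H G) (K : subgroup H) (g : G) : Prop :=
  exists k, K k /\ phi k = g.
Definition imgT (H G : group) (phi : hom H G) (K : subgroup H) :=
  {g : G | img phi K g}.
Definition subT (H : group) (K : subgroup H) := {k : H | K k}.

Lemma hom_ginv (H G : group) (phi : hom H G) (x : H) :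
  phi (ginv x) = ginv (phi x).
Proof.
have cancel_l : forall (Q : group) (a b c : Q), gmul a b = gmul a c -> b = c.
  move=> Q a b c e.
  by rewrite -(gmul1l b) -(gmul1l c) -(gmulVl a) -!gmulA e.
have mul1r : forall (Q : group) (a : Q), gmul a gone = a.
  move=> Q a; apply: (cancel_l _ (ginv a)).
  by rewrite gmulA gmulVl gmul1l.
have mulVr : forall (Q : group) (a : Q), gmul a (ginv a) = gone.
  move=> Q a; apply: (cancel_l _ (ginv a)).
  by rewrite gmulA gmulVl gmul1l mul1r.
have phi1 : phi gone = gone.
  apply: (cancel_l _ (phi gone)); by rewrite -hfunM gmul1l mul1r.
apply: (cancel_l _ (phi x)); by rewrite -hfunM mulVr mulVr phi1.
Qed.

Lemma img_shift (H G : group) (phi : hom H G) (K : subgroup H) (k : subT K)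
  (t : G) : img phi K t -> img phi K (gmul (ginv (phi (ginv (proj1_sig k)))) t).
Proof.
case: k => k Kk [k' [Kk' <-]] /=.
exists (gmul (ginv (ginv k)) k'); split.
  by apply: smemM => //; do 2 apply: smemV.
by rewrite hfunM !hom_ginv.
Qed.

Definition caK (H G : group) (A : Type) (phi : hom H G) (K : subgroup H)
  (T : list G) (mu : (memT T -> A) -> A)
  (hT : forall t, In t T -> img phi K t) : (imgT phi K -> A) -> (subT K -> A) :=
  fun x k => mu (fun t =>
    x (exist _ (gmul (ginv (phi (ginv (proj1_sig k)))) (proj1_sig t))
             (img_shift k (hT _ (proj2_sig t))))).

From mathcomp Require Import all_boot.
From Stdlib Require Import List.
From Stdlib Require Import Classical ClassicalEpsilon FunctionalExtensionality.
From Stdlib Require Import PropExtensionality ProofIrrelevance.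

Set Implicit Arguments. Unset Strict Implicit. Unset Printing Implicit Defensive.

(* The proof rests on three identities for T = ca phi mu:
   - T(x)(h) only reads x on phi(h)T, so T(x)(h) depends on h only via phi(h);
   - translating x by phi(h) and restricting to phi(K) gives T_K, evaluated
     at k, the value T(x)(h k)  (caK_translate);
   - extending y : A^{phi(K)} by a constant a0 gives T(ext y)(k) = T_K(y)(k)
     on K, and the constant mu(a0,...,a0) off phi^{-1}(phi(K)).
   Injectivity (1) follows by extending/translating configurations; for (2)
   we split bijectivity into injectivity plus surjectivity (using choice), and
   build preimages under T coset by coset of K, through a choice of coset
   representatives and a section of T_K. *)

Section GroupFacts.
Variable Q : group.

Lemma gcancel (a b c : Q) : gmul a b = gmul a c -> b = c.
Proof. by move=> e; rewrite -(gmul1l b) -(gmul1l c) -(gmulVl a) -!gmulA e. Qed.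

Lemma gmul1r (a : Q) : gmul a gone = a.
Proof. by apply: (@gcancel (ginv a)); rewrite gmulA gmulVl gmul1l. Qed.

Lemma gmulVr (a : Q) : gmul a (ginv a) = gone.
Proof. by apply: (@gcancel (ginv a)); rewrite gmulA gmulVl gmul1l gmul1r. Qed.

Lemma ginvK (a : Q) : ginv (ginv a) = a.
Proof. by apply: (@gcancel (ginv a)); rewrite gmulVl gmulVr. Qed.

End GroupFacts.

Lemma hom1 (H G : group) (phi : hom H G) : phi gone = gone.
Proof. by apply: (@gcancel _ (phi gone)); rewrite -hfunM gmul1l gmul1r. Qed.

(* The shift by phi(h^{-1}) used in [ca] is left multiplication by phi(h). *)
Lemma hom_ginvK (H G : group) (phi : hom H G) (h : H) :
  ginv (phi (ginv h)) = phi h.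
Proof. by rewrite hom_ginv ginvK. Qed.

Lemma coset_rep (H : group) (K : subgroup H) :
  exists rep : H -> H, (forall h, K (gmul (ginv (rep h)) h)) /\
                       (forall h k, K k -> rep (gmul h k) = rep h).
Proof.
pose coset h (r : H) := K (gmul (ginv r) h).
exists (fun h => epsilon (inhabits (gone : H)) (coset h)); split.
  move=> h; apply: (epsilon_spec _ (coset h)); exists h.
  by rewrite /coset gmulVl; exact: smem1.
move=> h k Kk; congr epsilon.
apply: functional_extensionality => r; apply: propositional_extensionality.
rewrite /coset; split=> [Khk | Kh]; last by rewrite gmulA; exact: smemM.
by have := smemM Khk (smemV Kk); rewrite -!gmulA gmulVr gmul1r.
Qed.

Definition onto (X Y : Type) (f : X -> Y) := forall y, exists x, f x = y.

Lemma onto_section (X Y : Type) (f : X -> Y) :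
  onto f -> exists g : Y -> X, cancel g f.
Proof.
move=> surj; exists (fun y => proj1_sig (constructive_indefinite_description _ (surj y))).
by move=> y; exact: proj2_sig (constructive_indefinite_description _ (surj y)).
Qed.

Lemma bijective_inj_onto (X Y : Type) (f : X -> Y) :
  bijective f <-> injective f /\ onto f.
Proof.
split=> [[g fK gK] | [inj surj]].
  by split; [exact: can_inj fK | move=> y; exists (g y)].
have [g gK] := onto_section surj.
exists g => //; exact: inj_can_sym gK inj.
Qed.

Definition extend (X A : Type) (P : X -> Prop) (y : {x | P x} -> A) (a0 : A)
  (x : X) : A :=
  match excluded_middle_informative (P x) with
  | left p => y (exist _ x p)
  | right _ => a0
  end.

Lemma extendE (X A : Type) (P : X -> Prop) (y : {x | P x} -> A) a0 x (p : P x) :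
  extend y a0 x = y (exist _ x p).
Proof.
rewrite /extend; case: excluded_middle_informative => [p' | np]; last by [].
by rewrite (proof_irrelevance _ p p').
Qed.

Lemma extend_out (X A : Type) (P : X -> Prop) (y : {x | P x} -> A) a0 x :
  ~ P x -> extend y a0 x = a0.
Proof. by rewrite /extend; case: excluded_middle_informative. Qed.

Lemma two_elems (A : finType) : 1 < #|A| -> exists a0 a1 : A, a0 <> a1.
Proof. by case/card_gt1P => a0 [a1 [_ _ /eqP n01]]; exists a0, a1. Qed.

Section CellularAutomaton.
Variables (A : Type) (G H : group) (K : subgroup H) (phi : hom H G)
  (T : list G) (mu : (memT T -> A) -> A) (hT : forall t, In t T -> img phi K t).

Lemma img1 : img phi K gone.
Proof. by exists gone; split; [exact: smem1 | exact: hom1]. Qed.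

Lemma img_cancel_r (a b : G) : img phi K (gmul a b) -> img phi K b -> img phi K a.
Proof.
case=> k1 [K1 e1] [k2 [K2 e2]]; exists (gmul k1 (ginv k2)); split.
  by apply: smemM => //; exact: smemV.
by rewrite hfunM hom_ginv e1 e2 -gmulA gmulVr gmul1r.
Qed.

Lemma caE x h : ca phi mu x h = mu (fun t => x (gmul (phi h) (proj1_sig t))).
Proof. by rewrite /ca /shift hom_ginvK. Qed.

Lemma ca_local x1 x2 h :
  (forall t, In t T -> x1 (gmul (phi h) t) = x2 (gmul (phi h) t)) ->
  ca phi mu x1 h = ca phi mu x2 h.
Proof.
move=> e; rewrite !caE; congr mu; apply: functional_extensionality => t.
exact: e (proj2_sig t).
Qed.

Lemma ca_phi x h1 h2 : phi h1 = phi h2 -> ca phi mu x h1 = ca phi mu x h2.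
Proof. by move=> e; rewrite !caE e. Qed.

Lemma caK_restrict x k :
  caK mu hT (fun u => x (proj1_sig u)) k = ca phi mu x (proj1_sig k).
Proof. by []. Qed.

Lemma caK_translate (h : H) x k :
  caK mu hT (fun u => x (gmul (phi h) (proj1_sig u))) k =
  ca phi mu x (gmul h (proj1_sig k)).
Proof.
rewrite /caK caE hfunM; congr mu; apply: functional_extensionality => t /=.
by rewrite hom_ginvK gmulA.
Qed.

Lemma ca_extend_in (y : imgT phi K -> A) a0 k :
  ca phi mu (extend y a0) (proj1_sig k) = caK mu hT y k.
Proof.
rewrite caE /caK; congr mu; apply: functional_extensionality => t.
move: (img_shift k (hT (proj2_sig t))); rewrite hom_ginvK => p.
exact: extendE.
Qed.

Lemma ca_extend_out (y : imgT phi K -> A) a0 h :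
  ~ img phi K (phi h) -> ca phi mu (extend y a0) h = mu (fun _ => a0).
Proof.
move=> nh; rewrite caE; congr mu; apply: functional_extensionality => t.
apply: extend_out => ht; apply: nh.
exact: img_cancel_r ht (hT (proj2_sig t)).
Qed.

(* If g is not in phi(H), changing x at g is invisible to T. *)
Lemma inj_onto_phi (a0 a1 : A) :
  a0 <> a1 -> injective (ca phi mu) -> onto phi.
Proof.
move=> n01 inj g; apply: NNPP => not_img.
pose x1 := extend (fun _ : {u | u = g} => a1) a0.
have x1g : x1 g = a1 := extendE _ _ (erefl g).
have e : ca phi mu (fun _ => a0) = ca phi mu x1.
  apply: functional_extensionality => h; apply: ca_local => t Ht.
  rewrite /x1 extend_out // => eg.
  case: (hT Ht) => k [_ ek]; apply: not_img.
  by exists (gmul h k); rewrite hfunM ek.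
by apply: n01; rewrite -x1g -(inj _ _ e).
Qed.

(* If T_K(y1) = T_K(y2), the constant extensions of y1, y2 have the same
   image under T, by the two extension identities. *)
Lemma inj_injK (a0 : A) : injective (ca phi mu) -> injective (caK mu hT).
Proof.
move=> inj y1 y2 e.
have e_ext : ca phi mu (extend y1 a0) = ca phi mu (extend y2 a0).
  apply: functional_extensionality => h.
  case: (classic (img phi K (phi h))) => [[k [Kk ek]] | nh].
    rewrite -!(ca_phi _ ek).
    by rewrite !(ca_extend_in _ _ (exist _ k Kk)) e.
  by rewrite !ca_extend_out.
apply: functional_extensionality => [[g p]].
by rewrite -(extendE y1 a0 p) -(extendE y2 a0 p) (inj _ _ e_ext).
Qed.

(* T(x) on hK determines x on phi(h)phi(K) through T_K; phi onto covers G. *)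
Lemma injK_inj : injective (caK mu hT) -> onto phi -> injective (ca phi mu).
Proof.
move=> inj surj x1 x2 e; apply: functional_extensionality => g.
have [h <-] := surj g.
pose y (x : G -> A) (u : imgT phi K) := x (gmul (phi h) (proj1_sig u)).
have : y x1 = y x2.
  by apply: inj; apply: functional_extensionality => k; rewrite !caK_translate e.
by move/(f_equal (fun f => f (exist _ gone img1))); rewrite /y /= gmul1r.
Qed.

(* Every value of T is constant on the fibres of phi. *)
Lemma onto_ca_injphi (a0 a1 : A) :
  a0 <> a1 -> onto (ca phi mu) -> injective phi.
Proof.
move=> n01 surj h1 h2 e; apply: NNPP => n12.
pose w := extend (fun _ : {h | h = h1} => a0) a1.
have w1 : w h1 = a0 := extendE _ _ (erefl h1).
have w2 : w h2 = a1 := extend_out _ _ (fun e21 => n12 (esym e21)).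
have [x ex] := surj w.
by apply: n01; rewrite -w1 -w2 -ex (ca_phi x e).
Qed.

(* A T-preimage of an extension of z restricts to a T_K-preimage of z. *)
Lemma onto_ca_ontoK (a0 : A) : onto (ca phi mu) -> onto (caK mu hT).
Proof.
move=> surj z; have [x ex] := surj (extend z a0).
exists (fun u => x (proj1_sig u)); apply: functional_extensionality => k.
by rewrite caK_restrict ex; case: k => k p; exact: extendE.
Qed.

(* Preimage of w under T: on the coset rK, undo the translation by phi(r)
   and take a T_K-preimage of w restricted to rK. *)
Lemma ontoK_onto_ca (a0 : A) :
  onto (caK mu hT) -> injective phi -> onto phi -> onto (ca phi mu).
Proof.
move=> ontoK injphi ontophi w.
have [Ki KiK] := onto_section ontoK.
have [psi psiK] := onto_section ontophi.
have phiK : cancel phi psi by move=> h; apply: injphi; rewrite psiK.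
have [rep [repK repM]] := coset_rep K.
pose zK (r : H) (k : subT K) := w (gmul r (proj1_sig k)).
exists (fun g => extend (Ki (zK (rep (psi g)))) a0
                        (phi (gmul (ginv (rep (psi g))) (psi g)))).
apply: functional_extensionality => h; set r := rep h.
have -> : w h = caK mu hT (Ki (zK r)) (exist _ _ (repK h)).
  by rewrite KiK /zK /= gmulA gmulVr gmul1l.
rewrite -(ca_extend_in _ a0) !caE; congr mu.
apply: functional_extensionality => t /=.
case: (hT (proj2_sig t)) => k [Kk <-].
by rewrite -!hfunM phiK repM // -/r gmulA.
Qed.

End CellularAutomaton.

Theorem theorem5p7 (A : finType) (hA : 1 < #|A|) (G H : group)
  (K : subgroup H) (phi : hom H G) (T : list G) (mu : (memT T -> A) -> A)
  (hT : forall t, In t T -> img phi K t) :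
  (injective (ca phi mu) <->
     injective (caK mu hT) /\ (forall g : G, exists h : H, phi h = g))
  /\
  (bijective (ca phi mu) <->
     bijective (caK mu hT) /\ bijective phi).
Proof.
have [a0 [a1 n01]] := two_elems hA.
have inj_iff : injective (ca phi mu) <-> injective (caK mu hT) /\ onto phi.
  split=> [injT | [injK ontophi]]; last exact: injK_inj injK ontophi.
  by split; [exact: inj_injK a0 injT | exact: (inj_onto_phi hT n01 injT)].
split=> //; split.
- move=> /bijective_inj_onto [injT ontoT].
  have [injK ontophi] := inj_iff.1 injT.
  split; apply/bijective_inj_onto; split=> //.
    exact: onto_ca_ontoK a0 ontoT.
  exact: onto_ca_injphi n01 ontoT.
- move=> [/bijective_inj_onto [injK ontoK] /bijective_inj_onto [injphi ontophi]].
  apply/bijective_inj_onto; split; first exact: inj_iff.2.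
  exact: ontoK_onto_ca a0 ontoK injphi ontophi.
Qed.
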